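(* Let $n$ be a positive integer, $i,k\in\{1,\ldots,n\}$ with $k<n$, and let $H\sim\text{Hyp}(n,i,k)$. Then \[ \mathbb{E}(H\mid H\ge \mathbb{E}(H)) \,\le\, \lceil\mathbb{E}(H)\rceil + \sqrt{\text{Var}(H) \cdot \frac{n-1}{n-k} + 1}. \]
   Context: $\text{Hyp}(n,i,k)$ denotes the hypergeometric distribution: the number of black marbles in a sample without replacement of size $k$ from an urn with $i$ black and $n-i$ white marbles, i.e. $\mathbb{P}(H=j)=\binom{i}{j}\binom{n-i}{k-j}/\binom{n}{k}$. One has $\mathbb{E}(H)=ik/n$ and $\text{Var}(H)=k\cdot\frac{i}{n}\cdot\frac{n-i}{n}\cdot\frac{n-k}{n-1}$. For real $x$, $\lceil x\rceil=\min\{s\in\mathbb{Z}: s\ge x\}$. *)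

From mathcomp Require Import all_boot all_order all_algebra.
From mathcomp Require Import reals.
Set Implicit Arguments. Unset Strict Implicit. Unset Printing Implicit Defensive.
Import Order.TTheory GRing.Theory Num.Theory.
Local Open Scope ring_scope.

(* Hypergeometric distribution Hyp(n,i,k): P(H = j) = C(i,j) C(n-i,k-j) / C(n,k),
   supported on j = 0..k (values j outside 0..k have probability 0). *)
Definition hyp_pmf {R : realType} (n i k j : nat) : R :=
  ('C(i, j) * 'C(n - i, k - j))%:R / 'C(n, k)%:R.

Definition hyp_mean {R : realType} (n i k : nat) : R :=
  \sum_(j < k.+1) (j%:R * hyp_pmf n i k j).

Definition hyp_var {R : realType} (n i k : nat) : R :=
  \sum_(j < k.+1) ((j%:R - hyp_mean n i k) ^+ 2 * hyp_pmf n i k j).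

Definition hyp_cond_mean_upper {R : realType} (n i k : nat) : R :=
  (\sum_(j < k.+1 | hyp_mean (R := R) n i k <= j%:R) (j%:R * hyp_pmf n i k j)) /
  (\sum_(j < k.+1 | hyp_mean (R := R) n i k <= j%:R) hyp_pmf n i k j).

From mathcomp Require Import all_boot all_order all_algebra.
From mathcomp Require Import reals.
From mathcomp Require Import ring lra.

(* Write g_j = C(i,j) C(n-i,k-j), mu = ik/n and nu = (n-1) Var H.  The ratio
   identity (i-j)(k-j) g_j = (j+1)(n-i-k+j+1) g_(j+1) collapses tail sums over
   j >= c to a boundary term a_c = c (n-i-k+c) g_c.  Applied to 1 and to j - mu
   it gives, for the centred tail moments S_p = sum_(j >= c) g_j (j - mu)^p,
     n S_1 = a_c   and   (n-1) S_2 - (2 mu + n - i - k) S_1 - nu S_0 = a_c (c - 1 - mu).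
   For c = ceil mu the conditional mean is mu + S_1/S_0, and the second relation
   together with Cauchy-Schwarz S_1^2 <= S_0 S_2 yields
   (S_1/S_0 - (c - mu))^2 <= Var H + 1.  The factor (n-1)/(n-k) >= 1 is slack. *)

Set Implicit Arguments.
Unset Strict Implicit.
Unset Printing Implicit Defensive.
Import Order.TTheory GRing.Theory Num.Theory.
Local Open Scope ring_scope.

Lemma natr_mul_binS (R : pzRingType) (m j : nat) :
  j.+1%:R * 'C(m, j.+1)%:R = (m%:R - j%:R) * 'C(m, j)%:R :> R.
Proof.
rewrite -natrM mul_bin_left natrM.
have [le_jm | lt_mj] := leqP j m; first by rewrite natrB.
by rewrite bin_small // !mulr0.
Qed.

Lemma weighted_sum_sqr_le (R : realDomainType) (I : Type) (r : seq I)
    (w x : I -> R) :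
  (forall j, 0 <= w j) ->
  (\sum_(j <- r) w j * x j) ^+ 2 <=
    (\sum_(j <- r) w j) * \sum_(j <- r) w j * x j ^+ 2.
Proof.
move=> w_ge0.
pose h j l := w j * (w l * x l ^+ 2) - w j * x j * (w l * x l).
have sum_h : \sum_(j <- r) \sum_(l <- r) h j l =
    (\sum_(j <- r) w j) * (\sum_(j <- r) w j * x j ^+ 2)
    - (\sum_(j <- r) w j * x j) ^+ 2.
  rewrite expr2 !mulr_suml -sumrB; apply: eq_bigr => j _.
  by rewrite !mulr_sumr -sumrB.
have : 0 <= \sum_(j <- r) \sum_(l <- r) (h j l + h l j).
  apply: sumr_ge0 => j _; apply: sumr_ge0 => l _.
  have -> : h j l + h l j = w j * w l * (x j - x l) ^+ 2 by rewrite /h; ring.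
  by rewrite mulr_ge0 ?sqr_ge0 // mulr_ge0.
under eq_bigr do rewrite big_split /=.
rewrite big_split /= [X in _ + X]exchange_big /= sum_h.
lra.
Qed.

Section HypergeometricWeights.
Variable R : comPzRingType.
Variables n i k : nat.
Hypothesis le_i_n : (i <= n)%N.

Definition hyp_weight (j : nat) : R := ('C(i, j) * 'C(n - i, k - j))%:R.

Definition hyp_tail_term (j : nat) : R :=
  j%:R * (n%:R - i%:R - k%:R + j%:R) * hyp_weight j.

Lemma hyp_weight_succ j : (j < k)%N ->
  (i%:R - j%:R) * (k%:R - j%:R) * hyp_weight j = hyp_tail_term j.+1.
Proof.
move=> lt_jk.
have kj_succ : (k - j = (k - j.+1).+1)%N by rewrite subnSK.
have binS_right : (k%:R - j%:R) * 'C(n - i, k - j)%:R =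
    (n%:R - i%:R - k%:R + j.+1%:R) * 'C(n - i, k - j.+1)%:R :> R.
  rewrite -natrB ?(ltnW lt_jk) // kj_succ natr_mul_binS !natrB //.
  by congr (_ * _); ring.
rewrite /hyp_tail_term /hyp_weight !natrM mulrACA -natr_mul_binS binS_right.
ring.
Qed.

Lemma hyp_tail_shift c (phi : R -> R) : (c <= k)%N ->
  hyp_tail_term c * phi (c%:R - 1) =
  \sum_(c <= j < k.+1) (hyp_tail_term j * phi (j%:R - 1)
    - (i%:R - j%:R) * (k%:R - j%:R) * hyp_weight j * phi j%:R).
Proof.
move=> le_ck; rewrite sumrB.
rewrite [X in _ = _ - X]big_nat_recr //= subrr mulr0 !mul0r addr0.
rewrite big_ltn ?ltnS // (big_add1 _ _ _ _ xpredT) /= -addrA.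
rewrite [X in _ = _ + X](_ : _ = 0) ?addr0 //.
apply/eqP; rewrite subr_eq0; apply/eqP/eq_big_nat => j /andP[_ lt_jk].
by rewrite hyp_weight_succ // -natr1 addrK.
Qed.

End HypergeometricWeights.

Section HypergeometricTailMoments.
Variable R : numFieldType.
Variables n i k : nat.
Hypotheses (le_i_n : (i <= n)%N) (n_gt0 : (0 < n)%N).

Local Notation weight := (hyp_weight R n i k).
Local Notation tail_term := (hyp_tail_term R n i k).

Definition hyp_mu : R := i%:R * k%:R / n%:R.

Definition hyp_nu : R := hyp_mu * (n%:R - i%:R) * (n%:R - k%:R) / n%:R.

Definition hyp_tail_moment (c p : nat) : R :=
  \sum_(c <= j < k.+1) weight j * (j%:R - hyp_mu) ^+ p.

Let n_neq0 : n%:R != 0 :> R.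
Proof. by rewrite pnatr_eq0 -lt0n. Qed.

Lemma hyp_tail_moment1E c : (c <= k)%N ->
  n%:R * hyp_tail_moment c 1 = tail_term c.
Proof.
move=> le_ck; rewrite -[tail_term c]mulr1.
rewrite (hyp_tail_shift le_i_n (fun=> 1) le_ck) mulr_sumr.
by apply: eq_bigr => j _; rewrite /hyp_tail_term /hyp_mu; field.
Qed.

Lemma hyp_tail_moment2E c : (c <= k)%N ->
  (n%:R - 1) * hyp_tail_moment c 2
    - (2 * hyp_mu + n%:R - i%:R - k%:R) * hyp_tail_moment c 1
    - hyp_nu * hyp_tail_moment c 0
  = n%:R * hyp_tail_moment c 1 * (c%:R - 1 - hyp_mu).
Proof.
move=> le_ck.
rewrite hyp_tail_moment1E // (hyp_tail_shift le_i_n (fun x => x - hyp_mu) le_ck).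
rewrite /hyp_tail_moment !mulr_sumr -!sumrB.
by apply: eq_bigr => j _; rewrite /hyp_tail_term /hyp_nu /hyp_mu; field.
Qed.

Lemma hyp_moment0E : hyp_tail_moment 0 0 = 'C(n, k)%:R.
Proof.
rewrite /hyp_tail_moment; under eq_bigr do rewrite expr0 mulr1.
by rewrite -natr_sum big_mkord binomial.Vandermonde subnKC.
Qed.

Lemma hyp_moment1_eq0 : hyp_tail_moment 0 1 = 0.
Proof.
apply: (mulfI n_neq0).
by rewrite hyp_tail_moment1E // /hyp_tail_term !mul0r mulr0.
Qed.

Lemma hyp_mu_ge0 : 0 <= hyp_mu.
Proof. by rewrite /hyp_mu divr_ge0 ?mulr_ge0. Qed.

Lemma hyp_mu_le_k : hyp_mu <= k%:R.
Proof. by rewrite /hyp_mu ler_pdivrMr ?ltr0n // mulrC ler_wpM2l ?ler_nat. Qed.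

Hypothesis le_k_n : (k <= n)%N.

Lemma hyp_nu_ge0 : 0 <= hyp_nu.
Proof.
rewrite /hyp_nu; apply: divr_ge0 (ler0n _ _).
apply: mulr_ge0; first apply: mulr_ge0 hyp_mu_ge0 _.
all: by rewrite subr_ge0 ler_nat.
Qed.

Lemma hyp_mu_le_i : hyp_mu <= i%:R.
Proof. by rewrite /hyp_mu ler_pdivrMr ?ltr0n // ler_wpM2l ?ler_nat. Qed.

End HypergeometricTailMoments.

Lemma nat_ceilP (R : archiRealDomainType) (x : R) : 0 <= x ->
  exists c : nat, [/\ Num.ceil x = c%:Z, x <= c%:R, c%:R - 1 <= x
                    & forall j : nat, (x <= j%:R) = (c <= j)%N].
Proof.
move=> x_ge0.
have [c ceilE] : exists c : nat, Num.ceil x = c%:Z.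
  by exists `|Num.ceil x|%N; rewrite gez0_abs // ceil_ge0 (lt_le_trans _ x_ge0) ?ltrN10.
exists c; split => //.
- by have := ceil_ge x; rewrite ceilE -pmulrn.
- by have := ceilB1_lt x; rewrite ceilE intrB -pmulrn => /ltW.
- by move=> j; rewrite pmulrn -ceil_le_int ceilE lez_nat.
Qed.

Lemma mean_shift_le_sqrt (R : rcfType) (n i k mu nu c d e : R) :
  (n - 1) * e - (2 * mu + n - i - k) * d - nu = n * d * (c - 1 - mu) ->
  2 <= n -> d ^+ 2 <= e -> mu <= c -> c - 1 <= mu -> 2 * mu <= i + k ->
  mu + d <= c + Num.sqrt (nu / (n - 1) + 1).
Proof.
move=> moment_eq n_ge2 d2_le_e mu_le_c c_le_mu1 mu2_le.
have [d_le | d_gt] := lerP d (c - mu).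
  by have := sqrtr_ge0 (nu / (n - 1) + 1); lra.
have n1_gt0 : 0 < n - 1 by lra.
set t := d - (c - mu).
have t2_le : (n - 1) * t ^+ 2 <= nu + (n - 1).
  have drift_le0 : d * (2 * mu - i - k - (n - 2) * (c - mu)) <= 0.
    apply: mulr_ge0_le0; first lra.
    have : 0 <= (n - 2) * (c - mu) by apply: mulr_ge0; lra.
    lra.
  have gap_le : (n - 1) * (c - mu) ^+ 2 <= n - 1.
    have sqr_le1 : (c - mu) ^+ 2 <= 1 by rewrite expr_le1 //; lra.
    by rewrite -[leRHS]mulr1 ler_wpM2l //; lra.
  have : (n - 1) * d ^+ 2 <= (n - 1) * e by rewrite ler_wpM2l //; lra.
  (* By moment_eq, (n-1) t^2 - nu - (n-1) = d (2 mu - i - k - (n-2)(c - mu))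
     + ((n-1)(c - mu)^2 - (n-1)) + (n-1)(d^2 - e). *)
  rewrite /t; lra.
have : t ^+ 2 <= nu / (n - 1) + 1.
  by rewrite -(ler_pM2l n1_gt0) mulrDr mulr1 [_ * (nu / _)]mulrC divfK ?gt_eqF.
move/ler_wsqrtr; rewrite sqrtr_sqr => /(le_trans (ler_norm t)).
rewrite /t; lra.
Qed.

Lemma weighted_mean_le_sqrt (R : rcfType) (n i k mu nu c S0 S1 S2 : R) :
  (n - 1) * S2 - (2 * mu + n - i - k) * S1 - nu * S0 = n * S1 * (c - 1 - mu) ->
  2 <= n -> 0 < S0 -> S1 ^+ 2 <= S0 * S2 ->
  mu <= c -> c - 1 <= mu -> 2 * mu <= i + k ->
  (S1 + mu * S0) / S0 <= c + Num.sqrt (nu / (n - 1) + 1).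
Proof.
move=> moment_eq n_ge2 S0_gt0 cauchy_schwarz mu_le_c c_le_mu1 mu2_le.
have S0_neq0 : S0 != 0 by rewrite gt_eqF.
rewrite mulrDl mulfK // addrC.
apply: (mean_shift_le_sqrt (i := i) (k := k) (e := S2 / S0)) => //.
- apply: (mulIf S0_neq0).
  transitivity ((n - 1) * S2 - (2 * mu + n - i - k) * S1 - nu * S0); first by field.
  by rewrite moment_eq; field.
- rewrite -(ler_pM2r (exprn_gt0 2 S0_gt0)).
  have -> : (S1 / S0) ^+ 2 * S0 ^+ 2 = S1 ^+ 2 by field.
  by have -> : S2 / S0 * S0 ^+ 2 = S0 * S2 by field.
Qed.

Section HypergeometricMoments.
Variable R : realType.
Variables n i k : nat.
Hypotheses (le_i_n : (i <= n)%N) (lt_k_n : (k < n)%N).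

Local Notation C := ('C(n, k)%:R : R).
Local Notation mu := (hyp_mu R n i k).
Local Notation M := (hyp_tail_moment R n i k).

Let n_gt0 : (0 < n)%N := leq_ltn_trans (leq0n k) lt_k_n.

Let C_neq0 : C != 0.
Proof. by rewrite pnatr_eq0 -lt0n bin_gt0 ltnW. Qed.

Lemma hyp_tail_mass c : \sum_(c <= j < k.+1) hyp_pmf n i k j = M c 0 / C.
Proof. by rewrite mulr_suml; apply: eq_bigr => j _; rewrite expr0 mulr1. Qed.

Lemma hyp_tail_first_moment c :
  \sum_(c <= j < k.+1) j%:R * hyp_pmf n i k j = (M c 1 + mu * M c 0) / C.
Proof.
rewrite mulr_sumr -big_split /= mulr_suml; apply: eq_bigr => j _.
by rewrite /hyp_pmf /hyp_weight; ring.
Qed.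

Lemma hyp_tail_moment1_sqr_le c : M c 1 ^+ 2 <= M c 0 * M c 2.
Proof.
have -> : M c 0 = \sum_(c <= j < k.+1) hyp_weight R n i k j.
  by apply: eq_bigr => j _; rewrite expr0 mulr1.
have -> : M c 1 = \sum_(c <= j < k.+1) hyp_weight R n i k j * (j%:R - mu).
  by apply: eq_bigr => j _; rewrite expr1.
by apply: weighted_sum_sqr_le => j; exact: ler0n.
Qed.

Lemma hyp_mean_closed : hyp_mean n i k = mu.
Proof.
have := hyp_tail_first_moment 0; rewrite big_mkord /hyp_mean => ->.
by rewrite hyp_moment1_eq0 // hyp_moment0E // add0r mulfK.
Qed.

Lemma hyp_var_closed : (1 < n)%N -> hyp_var n i k = hyp_nu R n i k / (n%:R - 1).
Proof.
move=> n_gt1.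
have n1_neq0 : n%:R - 1 != 0 :> R by rewrite subr_eq0 pnatr_eq1 gtn_eqF.
have := hyp_tail_moment2E R le_i_n n_gt0 (leq0n k).
rewrite hyp_moment1_eq0 // hyp_moment0E // !mulr0 mul0r subr0 => /eqP.
rewrite subr_eq0 => /eqP M2E.
rewrite /hyp_var hyp_mean_closed.
have -> : \sum_(j < k.+1) (j%:R - mu) ^+ 2 * hyp_pmf n i k j = M 0 2 / C.
  rewrite mulr_suml big_mkord.
  by apply: eq_bigr => j _; rewrite /hyp_pmf /hyp_weight; ring.
by rewrite -[M 0 2](mulKf n1_neq0) M2E -mulrA mulfK // mulrC.
Qed.

Lemma hyp_cond_mean_upper_tail c :
  (forall j : nat, (mu <= j%:R) = (c <= j)%N) ->
  hyp_cond_mean_upper n i k = (M c 1 + mu * M c 0) / M c 0.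
Proof.
move=> mu_leE.
have tail (F : nat -> R) :
    \sum_(j < k.+1 | mu <= j%:R) F j = \sum_(c <= j < k.+1) F j.
  by rewrite big_geq_mkord; apply: eq_bigl => j; rewrite mu_leE.
rewrite /hyp_cond_mean_upper hyp_mean_closed.
rewrite (tail (fun j => j%:R * hyp_pmf n i k j)) tail.
rewrite hyp_tail_first_moment hyp_tail_mass.
by rewrite invf_div mulrA divfK.
Qed.

End HypergeometricMoments.

Theorem theorem5 (R : realType) (n i k : nat) :
  (0 < n)%N -> (1 <= i <= n)%N -> (1 <= k)%N -> (k < n)%N ->
  hyp_cond_mean_upper (R := R) n i k <=
    (Num.ceil (hyp_mean (R := R) n i k))%:~R
    + Num.sqrt (hyp_var (R := R) n i k * ((n - 1)%:R / (n - k)%:R) + 1).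
Proof.
move=> n_gt0 /andP[_ le_i_n] k_gt0 lt_k_n.
have n_gt1 : (1 < n)%N := leq_ltn_trans k_gt0 lt_k_n.
have mu_le_i := hyp_mu_le_i R i n_gt0 (ltnW lt_k_n).
have mu_le_k := hyp_mu_le_k R k le_i_n n_gt0.
have [c [ceil_mu mu_le_c c_le_mu1 mu_leE]] := nat_ceilP (hyp_mu_ge0 R n i k).
have le_c_k : (c <= k)%N by rewrite -mu_leE.
rewrite hyp_var_closed // (hyp_cond_mean_upper_tail le_i_n lt_k_n mu_leE).
rewrite hyp_mean_closed // ceil_mu -pmulrn.
have : 0 <= hyp_tail_moment R n i k c 0.
  by apply: sumr_ge0 => j _; rewrite expr0 mulr1 ler0n.
rewrite le_eqVlt => /predU1P[<- | S0_gt0].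
  by rewrite invr0 mulr0; apply: addr_ge0; rewrite ?sqrtr_ge0.
apply: le_trans (weighted_mean_le_sqrt (hyp_tail_moment2E R le_i_n n_gt0 le_c_k) _ S0_gt0
  (hyp_tail_moment1_sqr_le _ _ _ _ _) mu_le_c c_le_mu1 _) _.
- by rewrite ler_nat.
- lra.
rewrite lerD2l ler_wsqrtr // lerD2r; apply: ler_peMr.
  apply: divr_ge0 (hyp_nu_ge0 R le_i_n (ltnW lt_k_n)) _.
  by rewrite subr_ge0 ler1n ltnW.
by rewrite ler_pdivlMr ?ltr0n ?subn_gt0 // mul1r ler_nat leq_sub2l.
Qed.
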